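(* Let $f\in\Gamma_0(X)$ and $x\in\operatorname{dom}f$. Then for every $\varepsilon\ge0$, \[ \partial_\varepsilon f^+(x)=\bigcup_{0\le\lambda\le1}\partial_{\varepsilon+\lambda f(x)-f^+(x)}(\lambda f)(x), \] where $f^+:=\max\{f,0\}$, $(\lambda f)(z):=\lambda f(z)$ for $\lambda>0$, and $0f:=\mathrm{I}_{\operatorname{dom}f}$.
   Context: $X$ is a real separated locally convex space with dual $X^*$ (weak$^*$ topology). $\Gamma_0(X)$ is the set of proper convex lsc functions $X\to\mathbb{R}\cup\{+\infty\}$; $\operatorname{dom}f=\{x: f(x)<+\infty\}$. $\mathrm{I}_A$ is the indicator function of $A$ ($0$ on $A$, $+\infty$ outside). For $g:X\to\overline{\mathbb{R}}$, $\partial_\delta g(x)=\{x^*\in X^*:\ g(y)\ge g(x)+\langle x^*,y-x\rangle-\delta\ \forall y\}$ if $g(x)\in\mathbb{R}$ and $\delta\ge0$, and $\partial_\delta g(x)=\emptyset$ if $g(x)\notin\mathbb{R}$ or $\delta<0$. *)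

From HB Require Import structures.
From mathcomp Require Import all_boot all_order all_algebra.
From mathcomp Require Import all_classical all_reals all_analysis.
Set Implicit Arguments. Unset Strict Implicit. Unset Printing Implicit Defensive.
Import Order.TTheory GRing.Theory Num.Theory.
Local Open Scope classical_set_scope.
Local Open Scope ring_scope.

Section Defs.
Context {R : realType} {X : tvsType R}.
Local Open Scope ereal_scope.

Definition dom (f : X -> \bar R) : set X := [set x | f x < +oo].

Definition indic (A : set X) : X -> \bar R :=
  fun z => if `[< A z >] then 0 else +oo.

Definition proper_fun (f : X -> \bar R) : Prop :=
  (forall z, f z != -oo) /\ exists z, f z < +oo.

Definition convex_efun (f : X -> \bar R) : Prop :=
  forall (x y : X) (t : R), (0 <= t <= 1)%R -> f x < +oo -> f y < +oo ->
    f ((1 - t) *: x + t *: y)%R <= ((1 - t)%R%:E * f x + t%:E * f y).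

Definition Gamma0 (f : X -> \bar R) : Prop :=
  [/\ proper_fun f, convex_efun f & lower_semicontinuous f].

Definition dual_elt (xs : {linear X -> R^o}) : Prop := continuous xs.

Definition esubdiff (delta : R) (g : X -> \bar R) (x : X)
    : set {linear X -> R^o} :=
  [set xs | dual_elt xs /\ g x \is a fin_num /\ (0 <= delta)%R /\
     forall y, g x + ((xs (y - x))%R - delta)%:E <= g y].

Definition fplus (f : X -> \bar R) : X -> \bar R := fun z => maxe (f z) 0.

Definition scalef (l : R) (f : X -> \bar R) : X -> \bar R :=
  if (0 < l)%R then (fun z => l%:E * f z) else indic (dom f).

End Defs.

From Pilot Require Import Defs.
From HB Require Import structures.
From mathcomp Require Import all_boot all_order all_algebra.
From mathcomp Require Import all_classical all_reals all_analysis.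
From mathcomp Require Import ring lra.
Import Order.TTheory GRing.Theory Num.Theory.
Local Open Scope classical_set_scope.
Local Open Scope ring_scope.

(* Inclusion "⊇": for 0 <= l <= 1 we have l f <= f^+ pointwise (with the
   convention 0 f = I_{dom f}), and the two functions are compared at x with
   the prescribed shift of the subdifferential parameter.

   Inclusion "⊆": if xs is an eps-subgradient of f^+ at x, the affine function
   H y = f^+(x) - eps + xs(y - x) lies below max(F, 0) on dom f, where F is
   the real-valued restriction of f.  A separation argument for a convex F
   and an affine H (Section PositivePartMinorant) produces l in [0, 1] with
   H <= l F on dom f: l is the supremum of the slopes H/F over the points
   where F > 0, and convexity shows this supremum is dominated by every slope
   H/F at points where F < 0.  This exactly says that xs is a subgradient of
   l f at x with the parameter eps + l f(x) - f^+(x). *)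

Section PositivePartMinorant.
Variables (R : realType) (T : lmodType R) (D : set T) (F H : T -> R).

Hypothesis F_convex : forall y0 y1 t, D y0 -> D y1 -> 0 <= t <= 1 ->
  D ((1 - t) *: y0 + t *: y1) /\
  F ((1 - t) *: y0 + t *: y1) <= (1 - t) * F y0 + t * F y1.
Hypothesis H_affine : forall y0 y1 t,
  H ((1 - t) *: y0 + t *: y1) = (1 - t) * H y0 + t * H y1.
Hypothesis H_le_pos : forall y, D y -> H y <= Num.max (F y) 0.

(* Every slope H/F where F > 0 is at most every slope H/F where F < 0:
   F vanishes on a convex combination z of the two points, where H z <= 0. *)
Lemma slope_pos_le_slope_neg y0 y1 : D y0 -> D y1 -> 0 < F y0 -> F y1 < 0 ->
  H y0 / F y0 <= H y1 / F y1.
Proof.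
move=> D0 D1 F0 F1.
have dpos : 0 < F y0 - F y1 by lra.
set t := F y0 / (F y0 - F y1).
have t01 : 0 <= t <= 1.
  by apply/andP; split; [rewrite divr_ge0 // ltW | rewrite ler_pdivrMr //; lra].
have one_t : 1 - t = - F y1 / (F y0 - F y1) by rewrite /t; field; lra.
have [Dz Fz] := F_convex y0 y1 t D0 D1 t01.
have comb_F0 : (1 - t) * F y0 + t * F y1 = 0 by rewrite one_t /t; field; lra.
have Hz_le0 : H ((1 - t) *: y0 + t *: y1) <= 0.
  by have := H_le_pos _ Dz; rewrite max_r // -comb_F0.
have comb_H : (1 - t) * H y0 + t * H y1 =
    (- F y1 * H y0 + F y0 * H y1) / (F y0 - F y1).
  by rewrite one_t /t; field; lra.
rewrite H_affine comb_H pmulr_lle0 ?invr_gt0 // in Hz_le0.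
rewrite ler_pdivrMr // mulrAC ler_ndivlMr //; lra.
Qed.

Lemma positive_part_minorant :
  exists l, 0 <= l <= 1 /\ forall y, D y -> H y <= l * F y.
Proof.
pose L := [set r : R | r = 0 \/ exists y, [/\ D y, 0 < F y & r = H y / F y]].
have L0 : L 0 by left.
have L_le1 : ubound L 1.
  move=> r [->|[y [Dy Fy ->]]]; first exact: ler01.
  by rewrite ler_pdivrMr // mul1r; have := H_le_pos _ Dy; rewrite max_l // ltW.
have supL : has_sup L by split; [exists 0 | exists 1].
exists (sup L); split.
  by rewrite (sup_upper_bound supL L0) ge_sup //; exists 0.
move=> y Dy; have [Fneg|Fpos|F0] := ltgtP (F y) 0.
- have Hy : H y <= 0 by have := H_le_pos _ Dy; rewrite max_r // ltW.
  suff : sup L <= H y / F y by rewrite ler_ndivlMr // mulrC.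
  apply: ge_sup; first by exists 0.
  move=> r [->|[y0 [D0 F0 ->]]]; first by rewrite ler_ndivlMr // mul0r.
  exact: slope_pos_le_slope_neg.
- have : H y / F y <= sup L by apply: sup_upper_bound supL _ _; right; exists y.
  by rewrite ler_pdivrMr // mulrC.
- by have := H_le_pos _ Dy; rewrite F0 maxxx mulr0.
Qed.

End PositivePartMinorant.

Arguments positive_part_minorant {R T D F H}.

Lemma scale_le_max0 (R : realDomainType) (l r : R) :
  0 <= l <= 1 -> l * r <= Num.max r 0.
Proof. by move=> /andP[l0 l1]; have [r0|r0] := leP 0 r; nra. Qed.

Lemma linear_increment_affine (R : realType) (X : lmodType R)
    (xs : {linear X -> R^o}) (x y0 y1 : X) (t : R) :
  xs ((1 - t) *: y0 + t *: y1 - x) = (1 - t) * xs (y0 - x) + t * xs (y1 - x).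
Proof. by rewrite !raddfB /= linearD /= !linearZ /= /GRing.scale /=; ring. Qed.

Section ScaledPositivePart.
Local Open Scope ereal_scope.
Variables (R : realType) (X : tvsType R) (f : X -> \bar R).

Lemma scalef_fin {l r : R} {y : X} :
  (0 <= l)%R -> f y = r%:E -> scalef l f y = (l * r)%:E.
Proof.
move=> l0 fy; rewrite /scalef; case: ifPn => lp; first by rewrite fy EFinM.
have -> : l = 0%R by apply/eqP; rewrite eq_le l0 andbT leNgt.
by rewrite /Defs.indic /dom /= fy mul0r; case: asboolP => //; rewrite ltry.
Qed.

Lemma scalef_infty {l : R} {y : X} :
  (0 <= l)%R -> f y = +oo -> scalef l f y = +oo.
Proof.
move=> l0 fy; rewrite /scalef; case: ifPn => lp.
  by rewrite fy gt0_muley ?lte_fin.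
by rewrite /Defs.indic /dom /= fy; case: asboolP => //; rewrite ltxx.
Qed.

Hypothesis f_noninf : forall z, f z != -oo.

Lemma dom_fineK {y : X} : dom f y -> f y = (fine (f y))%:E.
Proof. by move=> /lt_eqF fy; rewrite fineK // fin_numE f_noninf fy. Qed.

Lemma scalef_le_fplus {l : R} (y : X) :
  (0 <= l <= 1)%R -> scalef l f y <= fplus f y.
Proof.
move=> l01; have /andP[l0 _] := l01; rewrite /fplus.
case fyE : (f y) => [r| |]; last by move: (f_noninf y); rewrite fyE.
  by rewrite (scalef_fin l0 fyE) -EFin_max lee_fin scale_le_max0.
by rewrite (scalef_infty l0 fyE) maxye.
Qed.

Lemma fine_convex_on_dom : convex_efun f ->
  forall y0 y1 t, dom f y0 -> dom f y1 -> (0 <= t <= 1)%R ->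
  dom f ((1 - t) *: y0 + t *: y1)%R /\
  (fine (f ((1 - t) *: y0 + t *: y1)) <=
     (1 - t) * fine (f y0) + t * fine (f y1))%R.
Proof.
move=> fcvx y0 y1 t D0 D1 t01; have := fcvx y0 y1 t t01 D0 D1.
rewrite (dom_fineK D0) (dom_fineK D1) -!EFinM -EFinD => fz.
have Dz : dom f ((1 - t) *: y0 + t *: y1)%R.
  by rewrite /dom /=; apply: le_lt_trans fz _; rewrite ltry.
by split=> //; move: fz; rewrite (dom_fineK Dz) lee_fin.
Qed.

Variables (x : X) (eps : R).
Hypothesis dom_x : dom f x.
Let fx := fine (f x).

Lemma fplus_at_x : fplus f x = (Num.max fx 0)%:E.
Proof. by rewrite /fplus (dom_fineK dom_x) -EFin_max. Qed.

Lemma esubdiff_scalef_sub (l : R) : (0 <= eps)%R -> (0 <= l <= 1)%R ->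
  esubdiff (eps + l * fx - fine (fplus f x))%R (scalef l f) x `<=`
  esubdiff eps (fplus f) x.
Proof.
move=> eps0 l01 xs [cont_xs [_ [_ sub_xs]]]; have /andP[l0 _] := l01.
split=> //; split; first by rewrite fplus_at_x.
split=> // y; suff -> : fplus f x + ((xs (y - x))%R - eps)%:E =
    scalef l f x + ((xs (y - x))%R - (eps + l * fx - fine (fplus f x)))%:E.
  exact: le_trans (sub_xs y) (scalef_le_fplus y l01).
rewrite (scalef_fin l0 (dom_fineK dom_x)) fplus_at_x /= -!EFinD -/fx.
by congr (_%:E); ring.
Qed.

Hypothesis f_convex : convex_efun f.

Lemma esubdiff_fplus_sub :
  esubdiff eps (fplus f) x `<=`
  \bigcup_(l in `[0%R, 1%R]) esubdiff (eps + l * fx - fine (fplus f x))%R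
                                   (scalef l f) x.
Proof.
move=> xs [cont_xs [_ [_ sub_xs]]].
pose H y := (Num.max fx 0 - eps + xs (y - x))%R.
have H_affine y0 y1 t : H ((1 - t) *: y0 + t *: y1)%R =
    ((1 - t) * H y0 + t * H y1)%R.
  by rewrite /H linear_increment_affine; ring.
have H_le_pos y : dom f y -> (H y <= Num.max (fine (f y)) 0)%R.
  move=> Dy; have := sub_xs y.
  by rewrite fplus_at_x /fplus (dom_fineK Dy) -EFin_max -EFinD lee_fin /H; lra.
have [l [l01 H_le]] := positive_part_minorant (fine_convex_on_dom f_convex)
  H_affine H_le_pos.
have /andP[l0 l1] := l01.
exists l; first by rewrite /= in_itv /= l0 l1.
have fx_fin := scalef_fin l0 (dom_fineK dom_x).
split=> //; split; first by rewrite fx_fin.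
split.
  have := H_le x dom_x.
  by rewrite /H subrr raddf0 addr0 fplus_at_x /= -/fx; lra.
move=> y; rewrite fx_fin fplus_at_x /= -/fx.
case fyE : (f y) => [r| |]; last by move: (f_noninf y); rewrite fyE.
  have Dy : dom f y by rewrite /dom /= fyE ltry.
  rewrite (scalef_fin l0 fyE) -EFinD lee_fin.
  have -> : (l * fx + (xs (y - x) - (eps + l * fx - Num.max fx 0)) = H y)%R.
    by rewrite /H; ring.
  by have := H_le y Dy; rewrite fyE.
by rewrite (scalef_infty l0 fyE) leey.
Qed.

End ScaledPositivePart.

Theorem lemma4 (R : realType) (X : tvsType R) (f : X -> \bar R) (x : X)
  (eps : R) :
  hausdorff_space X -> Gamma0 f -> dom f x -> 0 <= eps ->
  esubdiff eps (fplus f) x =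
  \bigcup_(l in `[0, 1]) esubdiff (eps + l * fine (f x) - fine (fplus f x))
                                   (scalef l f) x.
Proof.
move=> _ [[f_noninf _] f_convex _] dom_x eps0.
apply/seteqP; split; first exact: esubdiff_fplus_sub.
move=> xs [l]; rewrite /= in_itv /= => l01.
exact: esubdiff_scalef_sub.
Qed.
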